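(* Let $\mathfrak g$ be a finite-dimensional Lie algebra over a field $\mathbb K$ of characteristic zero and let $V=V^2$ be a $\mathfrak g$-module regarded as a dg $\mathfrak g$-module concentrated in degree $2$. A linear map $\alpha_2\colon V^2\to\wedge^2\mathfrak g^\vee\otimes\mathfrak g$ defines a dg Loday–Pirashvili module $\alpha=\{\alpha_2\}$ on $V$ if and only if the corresponding map $\alpha_2\colon\wedge^2\mathfrak g\to\operatorname{Hom}(V^2,\mathfrak g)$ defines an abelian extension of $\mathfrak g$ along $\operatorname{Hom}(V^2,\mathfrak g)$, i.e. is a Chevalley–Eilenberg $2$-cocycle of $\mathfrak g$ with values in the $\mathfrak g$-module $\operatorname{Hom}(V^2,\mathfrak g)$.
   Context: $\operatorname{Hom}(V^2,\mathfrak g)$ is a $\mathfrak g$-module via $(x\cdot\phi)(v)=[x,\phi(v)]-\phi(x\triangleright v)$. For a dg $\mathfrak g$-module $S$, $\Omega_{\mathfrak g}(S)=\wedge^\bullet\mathfrak g^\vee\otimes S$ (degree $p+q$ on $\wedge^p\mathfrak g^\vee\otimes S^q$) carries the total differential $d^S_{\mathrm{tot}}=d^S_{\mathrm{CE}}+d^S$ (Chevalley–Eilenberg differential plus internal differential with sign $(-1)^p$). A dg Loday–Pirashvili module on a non-negative bounded dg $\mathfrak g$-module $V$ is a degree $0$ $\Omega_{\mathfrak g}$-linear map $\alpha\colon\Omega_{\mathfrak g}(V)\to\Omega_{\mathfrak g}(\mathfrak g)$ ($\mathfrak g$ in degree $0$ with adjoint action) with $\alpha\circ d^V_{\mathrm{tot}}=d^{\mathfrak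 g}_{\mathrm{CE}}\circ\alpha$; here $\alpha$ is generated by $\alpha_2$ via $\alpha(\omega\otimes v)=\omega\wedge\alpha_2(v)$. *)

From HB Require Import structures.
From mathcomp Require Import all_boot all_order all_algebra.
From mathcomp Require Import functions.
Set Implicit Arguments. Unset Strict Implicit. Unset Printing Implicit Defensive.
Import Order.TTheory GRing.Theory Num.Theory.
Local Open Scope ring_scope.

(* Cochains of g with values in S are modelled as functions [seq g -> S];
   a p-cochain (element of wedge^p g^v (x) S, g finite dimensional) is an
   alternating multilinear function on lists of length p. *)

Definition drop_at {T : Type} (i : nat) (xs : seq T) : seq T :=
  take i xs ++ drop i.+1 xs.

Definition sgn {S : zmodType} (i : nat) (s : S) : S := if odd i then - s else s.

Definition lie_bracket (K : fieldType) (g : lmodType K) (br : g -> g -> g) : Prop :=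
  [/\ (forall (a : K) x y z, br (a *: x + y) z = a *: br x z + br y z),
      (forall (a : K) x y z, br z (a *: x + y) = a *: br z x + br z y),
      (forall x, br x x = 0) &
      (forall x y z, br x (br y z) + br y (br z x) + br z (br x y) = 0)].

Definition lie_module (K : fieldType) (g V : lmodType K) (br : g -> g -> g)
    (act : g -> V -> V) : Prop :=
  [/\ (forall (a : K) x y v, act (a *: x + y) v = a *: act x v + act y v),
      (forall (a : K) x v w, act x (a *: v + w) = a *: act x v + act x w) &
      (forall x y v, act (br x y) v = act x (act y v) - act y (act x v))].

Definition is_cochain (K : fieldType) (g S : lmodType K) (p : nat)
    (c : seq g -> S) : Prop :=
  (forall xs ys (a : K) y z, (size xs + size ys).+1 = p ->
     c (xs ++ (a *: y + z) :: ys) = a *: c (xs ++ y :: ys) + c (xs ++ z :: ys)) /\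
  (forall xs ys zs y, size xs + size ys + size zs + 2 = p ->
     c (xs ++ y :: ys ++ y :: zs) = 0).

Definition ce_diff (g : zmodType) (S : zmodType) (br : g -> g -> g)
    (act : g -> S -> S) (c : seq g -> S) : seq g -> S :=
  fun xs =>
    \sum_(i < size xs) sgn i (act (nth 0 xs i) (c (drop_at i xs)))
  + \sum_(i < size xs) \sum_(j < size xs | (i < j)%N)
        sgn (i + j) (c (br (nth 0 xs i) (nth 0 xs j) :: drop_at i (drop_at j xs))).

(* The Omega_g-linear degree-0 map alpha : Omega_g(V) -> Omega_g(g) generated
   by alpha2 : V -> wedge^2 g^v (x) g, alpha(omega (x) v) = omega /\ alpha2(v),
   written on cochains via the (p,2)-shuffle formula:
   alpha(c)(x_0..x_{p+1}) = sum_{a<b} (-1)^(a+b+1) alpha2(c(.. ^x_a .. ^x_b ..))(x_a,x_b) *)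
Definition lp_alpha (g V : zmodType) (alpha2 : V -> g -> g -> g)
    (c : seq g -> V) : seq g -> g :=
  fun xs =>
    \sum_(a < size xs) \sum_(b < size xs | (a < b)%N)
      sgn (a + b + 1) (alpha2 (c (drop_at a (drop_at b xs))) (nth 0 xs a) (nth 0 xs b)).

(* V concentrated in degree 2 (zero internal differential): alpha is a dg
   Loday--Pirashvili module iff alpha o d_tot^V = d_CE^g o alpha, i.e. on every
   p-cochain c (total degree p+2), evaluated on p+3 arguments. *)
Definition dg_LP_module (K : fieldType) (g V : lmodType K) (br : g -> g -> g)
    (act : g -> V -> V) (alpha2 : V -> g -> g -> g) : Prop :=
  forall (p : nat) (c : seq g -> V), is_cochain p c ->
    forall xs : seq g, size xs = p.+3 ->
      lp_alpha alpha2 (ce_diff br act c) xs = ce_diff br br (lp_alpha alpha2 c) xs.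

Definition hom_act (g V : zmodType) (br : g -> g -> g) (act : g -> V -> V)
    (x : g) (phi : V -> g) : V -> g :=
  fun v => br x (phi v) - phi (act x v).

Definition alpha2_hom (g V : zmodType) (alpha2 : V -> g -> g -> g) : seq g -> (V -> g) :=
  fun xs v => alpha2 v (nth 0 xs 0) (nth 0 xs 1).

Definition ce_2cocycle_hom (g V : zmodType) (br : g -> g -> g) (act : g -> V -> V)
    (alpha2 : V -> g -> g -> g) : Prop :=
  forall xs : seq g, size xs = 3 ->
    ce_diff br (hom_act br act) (alpha2_hom alpha2) xs = 0.

From HB Require Import structures.
From mathcomp Require Import all_boot all_order all_algebra.
From mathcomp Require Import functions ssrAC.
Set Implicit Arguments. Unset Strict Implicit. Unset Printing Implicit Defensive.
Import GRing.Theory.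
Local Open Scope ring_scope.

(* Both sides of the dg Loday-Pirashvili equation are signed sums over the ways
   of singling out two or three entries of the argument list.  Regrouped as
   sums over triples (X, Y, Z), the difference alpha o d - d o alpha becomes
   the signed sum of the Chevalley-Eilenberg coboundary of alpha2 in Hom(V, g),
   evaluated at (X, Y, Z) and at c(remaining entries); the terms in which a
   bracket is fed into c cancel.  So a cocycle gives a dg module, and
   conversely the dg equation on constant 0-cochains is the cocycle equation. *)

Section PickSums.
Variable T : Type.

(* [pick<k>_sum F xs] is the sum over i1 < .. < ik of
   (-1)^(i1 + .. + ik) F x_i1 .. x_ik (xs with x_i1, .., x_ik removed). *)
Fixpoint pick1_sum (S : zmodType) (F : T -> seq T -> S) (xs : seq T) : S :=
  if xs is x :: xs' then F x xs' - pick1_sum (fun y r => F y (x :: r)) xs' else 0.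

Fixpoint pick2_sum (S : zmodType) (F : T -> T -> seq T -> S) (xs : seq T) : S :=
  if xs is x :: xs' then
    - pick1_sum (F x) xs' + pick2_sum (fun y z r => F y z (x :: r)) xs'
  else 0.

Fixpoint pick3_sum (S : zmodType) (F : T -> T -> T -> seq T -> S) (xs : seq T) : S :=
  if xs is x :: xs' then
    pick2_sum (F x) xs' - pick3_sum (fun a b c r => F a b c (x :: r)) xs'
  else 0.

Variable S : zmodType.

Lemma eq_pick1_sum (F G : T -> seq T -> S) xs :
  (forall y r, F y r = G y r) -> pick1_sum F xs = pick1_sum G xs.
Proof.
by elim: xs F G => [|x xs IH] F G //= FG; rewrite FG (IH _ (fun y r => G y (x :: r))).
Qed.

Lemma eq_pick2_sum (F G : T -> T -> seq T -> S) xs :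
  (forall y z r, F y z r = G y z r) -> pick2_sum F xs = pick2_sum G xs.
Proof.
elim: xs F G => [|x xs IH] F G //= FG.
by rewrite (eq_pick1_sum (G := G x)) // (IH _ (fun y z r => G y z (x :: r))).
Qed.

Lemma eq_pick3_sum (F G : T -> T -> T -> seq T -> S) xs :
  (forall a b c r, F a b c r = G a b c r) -> pick3_sum F xs = pick3_sum G xs.
Proof.
elim: xs F G => [|x xs IH] F G //= FG.
by rewrite (eq_pick2_sum (G := G x)) // (IH _ (fun a b c r => G a b c (x :: r))).
Qed.

Lemma pick1_sum0 xs : pick1_sum (fun _ _ => 0 : S) xs = 0.
Proof. by elim: xs => //= x xs ->; rewrite subr0. Qed.

Lemma pick2_sum0 xs : pick2_sum (fun _ _ _ => 0 : S) xs = 0.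
Proof. by elim: xs => //= x xs ->; rewrite pick1_sum0 oppr0 addr0. Qed.

Lemma pick3_sum0 xs : pick3_sum (fun _ _ _ _ => 0 : S) xs = 0.
Proof. by elim: xs => //= x xs ->; rewrite pick2_sum0 subr0. Qed.

Lemma pick1_sumD (F G : T -> seq T -> S) xs :
  pick1_sum (fun y r => F y r + G y r) xs = pick1_sum F xs + pick1_sum G xs.
Proof. by elim: xs F G => [|x xs IH] F G /=; rewrite ?addr0 // IH opprD addrACA. Qed.

Lemma pick1_sumN (F : T -> seq T -> S) xs :
  pick1_sum (fun y r => - F y r) xs = - pick1_sum F xs.
Proof. by elim: xs F => [|x xs IH] F /=; rewrite ?oppr0 // IH opprD. Qed.

Lemma pick1_sumB (F G : T -> seq T -> S) xs :
  pick1_sum (fun y r => F y r - G y r) xs = pick1_sum F xs - pick1_sum G xs.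
Proof. by rewrite pick1_sumD pick1_sumN. Qed.

Lemma pick2_sumD (F G : T -> T -> seq T -> S) xs :
  pick2_sum (fun y z r => F y z r + G y z r) xs = pick2_sum F xs + pick2_sum G xs.
Proof.
by elim: xs F G => [|x xs IH] F G /=; rewrite ?addr0 // IH pick1_sumD opprD addrACA.
Qed.

Lemma pick2_sumN (F : T -> T -> seq T -> S) xs :
  pick2_sum (fun y z r => - F y z r) xs = - pick2_sum F xs.
Proof. by elim: xs F => [|x xs IH] F /=; rewrite ?oppr0 // IH pick1_sumN opprD. Qed.

Lemma pick2_sumB (F G : T -> T -> seq T -> S) xs :
  pick2_sum (fun y z r => F y z r - G y z r) xs = pick2_sum F xs - pick2_sum G xs.
Proof. by rewrite pick2_sumD pick2_sumN. Qed.

Lemma pick3_sumD (F G : T -> T -> T -> seq T -> S) xs :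
  pick3_sum (fun a b c r => F a b c r + G a b c r) xs = pick3_sum F xs + pick3_sum G xs.
Proof.
by elim: xs F G => [|x xs IH] F G /=; rewrite ?addr0 // IH pick2_sumD opprD addrACA.
Qed.

Lemma pick3_sumN (F : T -> T -> T -> seq T -> S) xs :
  pick3_sum (fun a b c r => - F a b c r) xs = - pick3_sum F xs.
Proof. by elim: xs F => [|x xs IH] F /=; rewrite ?oppr0 // IH pick2_sumN opprD. Qed.

Lemma pick3_sumB (F G : T -> T -> T -> seq T -> S) xs :
  pick3_sum (fun a b c r => F a b c r - G a b c r) xs = pick3_sum F xs - pick3_sum G xs.
Proof. by rewrite pick3_sumD pick3_sumN. Qed.

Lemma pick3_sum_triple (F : T -> T -> T -> seq T -> S) x y z :
  pick3_sum F [:: x; y; z] = - F x y z [::].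
Proof. by rewrite /= !(subr0, oppr0, addr0). Qed.

Lemma pick1_sum_pick1 (F : T -> T -> seq T -> S) xs :
  pick1_sum (fun a r => pick1_sum (F a) r) xs =
  pick2_sum (fun y z r => F z y r - F y z r) xs.
Proof.
elim: xs F => [|x xs IH] F //=.
by rewrite pick1_sumB (IH (fun a u r => F a u (x :: r))) pick1_sumB !opprB addrA addrAC.
Qed.

Lemma pick1_sum_pick2 (F : T -> T -> T -> seq T -> S) xs :
  pick1_sum (fun a r => pick2_sum (F a) r) xs =
  pick3_sum (fun X Y Z r => F X Y Z r - F Y X Z r + F Z X Y r) xs.
Proof.
elim: xs F => [|x xs IH] F //=.
rewrite pick1_sumD pick1_sumN (IH (fun a u w r => F a u w (x :: r))).
rewrite pick1_sum_pick1 !pick2_sumD !pick2_sumN opprD opprK !addrA.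
by congr (_ - _); rewrite addrAC.
Qed.

Lemma pick2_sum_pick1 (F : T -> T -> T -> seq T -> S) xs :
  pick2_sum (fun a b r => pick1_sum (F a b) r) xs =
  pick3_sum (fun X Y Z r => F Y Z X r - F X Z Y r + F X Y Z r) xs.
Proof.
elim: xs F => [|x xs IH] F //=.
rewrite pick1_sum_pick1 !pick2_sumB (IH (fun a b u r => F a b u (x :: r))).
rewrite !pick2_sumD !pick2_sumN opprB addrA.
by congr (_ - _); rewrite addrC addrA addrAC.
Qed.

Lemma pick1_sum_pick2C (F : T -> T -> T -> seq T -> S) xs :
  pick1_sum (fun a r => pick2_sum (F a) r) xs =
  pick2_sum (fun u w r => pick1_sum (fun a r' => F a u w r') r) xs.
Proof. by rewrite pick1_sum_pick2 (pick2_sum_pick1 (fun u w a r => F a u w r)). Qed.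

Lemma pick2_sum_pick2C (F : T -> T -> T -> T -> seq T -> S) xs :
  pick2_sum (fun a b r => pick2_sum (F a b) r) xs =
  pick2_sum (fun u w r => pick2_sum (fun a b r' => F a b u w r') r) xs.
Proof.
elim: xs F => [|x xs IH] F //=.
rewrite !pick2_sumD !pick2_sumN (IH (fun a b u w r => F a b u w (x :: r))).
by rewrite pick1_sum_pick2C -(pick1_sum_pick2C (fun w a b r => F a b x w r)) addrCA.
Qed.

End PickSums.

Section AdditiveMaps.
Variables (T : Type) (S S' : zmodType) (f : S -> S').
Hypothesis fD : {morph f : u v / u + v}.

Lemma addmorph0 : f 0 = 0.
Proof. by apply: (@addrI _ (f 0)); rewrite -fD !addr0. Qed.

Lemma addmorphN : {morph f : u / - u}.
Proof. by move=> u; apply: (@addIr _ (f u)); rewrite -fD !addNr addmorph0. Qed.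

Lemma pick1_sum_morph (F : T -> seq T -> S) xs :
  f (pick1_sum F xs) = pick1_sum (fun y r => f (F y r)) xs.
Proof.
elim: xs F => [|x xs IH] F /=; first exact: addmorph0.
by rewrite fD addmorphN IH.
Qed.

Lemma pick2_sum_morph (F : T -> T -> seq T -> S) xs :
  f (pick2_sum F xs) = pick2_sum (fun y z r => f (F y z r)) xs.
Proof.
elim: xs F => [|x xs IH] F /=; first exact: addmorph0.
by rewrite fD addmorphN IH pick1_sum_morph.
Qed.

End AdditiveMaps.

Lemma sgnS (S : zmodType) i (s : S) : sgn i.+1 s = - sgn i s.
Proof. by rewrite /sgn /=; case: (odd i); rewrite ?opprK. Qed.

Lemma sgnN (S : zmodType) i (s : S) : sgn i (- s) = - sgn i s.
Proof. by rewrite /sgn; case: (odd i). Qed.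

Lemma drop_at0 (T : Type) (x : T) xs : drop_at 0 (x :: xs) = xs.
Proof. by rewrite /drop_at /= drop0. Qed.

Lemma drop_atS (T : Type) i (x : T) xs : drop_at i.+1 (x :: xs) = x :: drop_at i xs.
Proof. by []. Qed.

Section BigSums.
Variables T S : zmodType.

Lemma pick1_sumE (F : T -> seq T -> S) xs :
  \sum_(i < size xs) sgn i (F (nth 0 xs i) (drop_at i xs)) = pick1_sum F xs.
Proof.
elim: xs F => [|x xs IH] F /=; first by rewrite big_ord0.
rewrite big_ord_recl /= drop_at0 -(IH (fun y r => F y (x :: r))) -sumrN.
by congr (_ + _); apply: eq_bigr => i _; rewrite sgnS drop_atS.
Qed.

Lemma pick2_sumE (F : T -> T -> seq T -> S) xs :
  \sum_(i < size xs) \sum_(j < size xs | (i < j)%N)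
     sgn (i + j) (F (nth 0 xs i) (nth 0 xs j) (drop_at i (drop_at j xs))) =
  pick2_sum F xs.
Proof.
elim: xs F => [|x xs IH] F /=; first by rewrite big_ord0.
rewrite big_ord_recl; congr (_ + _).
  rewrite big_mkcond big_ord_recl /= add0r -pick1_sumE -sumrN.
  by apply: eq_bigr => j _; rewrite add0n sgnS drop_atS drop_at0.
rewrite -IH; apply: eq_bigr => i _.
rewrite big_mkcond big_ord_recl ltn0 /= add0r [RHS]big_mkcond.
by apply: eq_bigr => j _; rewrite /bump !add1n !add0n ltnS addSn addnS !sgnS opprK !drop_atS.
Qed.

End BigSums.

Lemma ce_diffE (g S : zmodType) (br : g -> g -> g) (act : g -> S -> S)
    (c : seq g -> S) xs :
  ce_diff br act c xs =
  pick1_sum (fun y r => act y (c r)) xs + pick2_sum (fun y z r => c (br y z :: r)) xs.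
Proof. by rewrite -pick1_sumE -pick2_sumE. Qed.

Lemma lp_alphaE (g V : zmodType) (alpha2 : V -> g -> g -> g) (c : seq g -> V) xs :
  lp_alpha alpha2 c xs = pick2_sum (fun y z r => - alpha2 (c r) y z) xs.
Proof.
rewrite /lp_alpha -pick2_sumE; apply: eq_bigr => i _; apply: eq_bigr => j _.
by rewrite addn1 sgnS sgnN.
Qed.

Lemma is_cochain0 (K : fieldType) (g S : lmodType K) (c : seq g -> S) :
  is_cochain 0 c.
Proof. by split=> [xs ys a y z | xs ys zs y]; rewrite // addrC. Qed.

Section LodayPirashvili.
Variables (g V : zmodType) (br : g -> g -> g) (act : g -> V -> V)
  (alpha2 : V -> g -> g -> g).

Definition alpha2_coboundary v X Y Z :=
  (br X (alpha2 v Y Z) - br Y (alpha2 v X Z) + br Z (alpha2 v X Y))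
  - (alpha2 (act X v) Y Z - alpha2 (act Y v) X Z + alpha2 (act Z v) X Y)
  - (alpha2 v (br Y Z) X - alpha2 v (br X Z) Y + alpha2 v (br X Y) Z).

Lemma ce_diff_alpha2_homE v X Y Z :
  ce_diff br (hom_act br act) (alpha2_hom alpha2) [:: X; Y; Z] v =
  alpha2_coboundary v X Y Z.
Proof.
rewrite ce_diffE /= !(subr0, oppr0, addr0) !fctE /hom_act /alpha2_hom /=.
rewrite /alpha2_coboundary !opprD !opprK !addrA.
by rewrite [LHS](ACl (1*3*5*2*4*6*9*8*7)).
Qed.

Lemma ce_2cocycle_homP :
  ce_2cocycle_hom br act alpha2 <-> forall v X Y Z, alpha2_coboundary v X Y Z = 0.
Proof.
split=> [cocycle v X Y Z | coboundary0].
  by rewrite -ce_diff_alpha2_homE cocycle.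
move=> [|X [|Y [|Z [|? ?]]]] //= _; apply: boolp.funext => v.
by rewrite ce_diff_alpha2_homE coboundary0.
Qed.

Hypothesis brD : forall x, {morph br x : u v / u + v}.
Hypothesis alpha2D : forall u v X Y, alpha2 (u + v) X Y = alpha2 u X Y + alpha2 v X Y.

Lemma lp_alpha_ce_diff_defect c xs :
  lp_alpha alpha2 (ce_diff br act c) xs - ce_diff br br (lp_alpha alpha2 c) xs =
  pick3_sum (fun X Y Z r => alpha2_coboundary (c r) X Y Z) xs.
Proof.
have -> : lp_alpha alpha2 (ce_diff br act c) xs =
  - pick2_sum (fun a b r => pick1_sum (fun u r' => alpha2 (act u (c r')) a b) r) xs
  - pick2_sum (fun a b r => pick2_sum (fun u w r' => alpha2 (c (br u w :: r')) a b) r) xs.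
  rewrite lp_alphaE -pick2_sumN -pick2_sumB; apply: eq_pick2_sum => a b r.
  have alpha2_abD : {morph (fun v => alpha2 v a b) : u v / u + v}.
    by move=> u v; apply: alpha2D.
  rewrite ce_diffE alpha2D opprD.
  by rewrite (pick1_sum_morph alpha2_abD) (pick2_sum_morph alpha2_abD).
have -> : ce_diff br br (lp_alpha alpha2 c) xs =
  - pick1_sum (fun y r => pick2_sum (fun u w r' => br y (alpha2 (c r') u w)) r) xs
  + pick2_sum (fun y z r => pick1_sum (fun w r' => alpha2 (c r') (br y z) w) r) xs
  - pick2_sum (fun y z r => pick2_sum (fun u w r' => alpha2 (c (br y z :: r')) u w) r) xs.
  rewrite ce_diffE -addrA; congr (_ + _).
    rewrite -pick1_sumN; apply: eq_pick1_sum => y r.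
    rewrite lp_alphaE pick2_sum_morph // -pick2_sumN.
    by apply: eq_pick2_sum => u w r'; rewrite addmorphN.
  rewrite -pick2_sumN -pick2_sumD; apply: eq_pick2_sum => y z r.
  by rewrite lp_alphaE /= pick1_sumN opprK pick2_sumN.
rewrite pick2_sum_pick2C !pick2_sum_pick1 pick1_sum_pick2 /alpha2_coboundary !pick3_sumB.
by rewrite opprB addrA subrK opprD opprK addrCA addrA.
Qed.
End LodayPirashvili.

Theorem corollary2p5 (K : fieldType) (g : vectType K) (V : lmodType K)
    (br : g -> g -> g) (act : g -> V -> V) (alpha2 : V -> g -> g -> g) :
  [pchar K] =i pred0 ->
  lie_bracket br ->
  lie_module br act ->
  (forall (a : K) v w x y, alpha2 (a *: v + w) x y = a *: alpha2 v x y + alpha2 w x y) ->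
  (forall v (a : K) x y z, alpha2 v (a *: x + y) z = a *: alpha2 v x z + alpha2 v y z) ->
  (forall v (a : K) x y z, alpha2 v z (a *: x + y) = a *: alpha2 v z x + alpha2 v z y) ->
  (forall v x, alpha2 v x x = 0) ->
  (dg_LP_module br act alpha2 <-> ce_2cocycle_hom br act alpha2).
Proof.
move=> _ [_ brZD _ _] _ alpha2ZD _ _ _.
have brD x : {morph br x : u v / u + v}.
  by move=> u v; have := brZD 1 u v x; rewrite !scale1r.
have alpha2D u v X Y : alpha2 (u + v) X Y = alpha2 u X Y + alpha2 v X Y.
  by have := alpha2ZD 1 u v X Y; rewrite !scale1r.
have defect := lp_alpha_ce_diff_defect act brD alpha2D.
rewrite ce_2cocycle_homP; split=> [dgLP v X Y Z | coboundary0 p c _ xs _].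
  have := defect (fun _ => v) [:: X; Y; Z].
  rewrite (dgLP 0 _ (is_cochain0 _)) // subrr pick3_sum_triple.
  by move/(congr1 -%R); rewrite oppr0 opprK.
apply/eqP; rewrite -subr_eq0 defect.
by rewrite (eq_pick3_sum (G := fun _ _ _ _ => 0)) ?pick3_sum0.
Qed.
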